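(* If $A\subseteq\mathbb{N}$ is $D$-w.e.u., then there is a disjoint strong array intersecting $\overline{A}=\mathbb{N}\setminus A$; that is, there is a computable $h\colon\mathbb{N}\to\mathfrak{P}_{\mathrm{fin}}(\mathbb{N})$ with $h(n)\cap h(m)=\emptyset$ for all $n\neq m$ and such that for every $n$ there is $z\in h(n)$ with $z\notin A$.
   Context: $\varphi_0,\varphi_1,\ldots$ is a standard acceptable enumeration of the partial computable functions $\mathbb{N}\to\mathbb{N}$, $\mathbb{1}_A$ the characteristic function of $A$. $\mathfrak{P}_{\mathrm{fin}}(\mathbb{N})$ is the set of finite subsets of $\mathbb{N}$; $f\colon\mathbb{N}\to\mathfrak{P}_{\mathrm{fin}}(\mathbb{N})$ is computable if $e\mapsto$ (canonical index of $f(e)$) is computable. A recursively enumerable $A$ is $D$-w.e.u. if there is a computable $f\colon\mathbb{N}\to\mathfrak{P}_{\mathrm{fin}}(\mathbb{N})$ such that for all $e$: if $\varphi_e(z)$ is defined for all $z\in f(e)$, then there is $z\in f(e)$ with $\varphi_e(z)\neq\mathbb{1}_A(z)$. *)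

(* A concrete model of partial computable
   functions: Kleene mu-recursive function terms, Goedel-numbered via
   MathComp's countable encoding of generic trees. *)
From mathcomp Require Import all_boot.

Set Implicit Arguments.
Unset Strict Implicit.
Unset Printing Implicit Defensive.

(* Syntax of (partial) mu-recursive functions; arity is implicit, argument
   vectors are lists. *)
Inductive recf : Type :=
  | RZero : recf
  | RSucc : recf
  | RProj : nat -> recf
  | RComp : recf -> list recf -> recf
  | RPrim : recf -> recf -> recf
  | RMu   : recf -> recf.

Inductive eval : recf -> seq nat -> nat -> Prop :=
  | ev_zero v : eval RZero v 0
  | ev_succ v : eval RSucc v (head 0 v).+1
  | ev_proj i v : eval (RProj i) v (nth 0 v i)
  | ev_comp f gs v ws y :
      evals gs v ws -> eval f ws y -> eval (RComp f gs) v y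
  | ev_prim0 f g v y : eval f v y -> eval (RPrim f g) (0 :: v) y
  | ev_primS f g n v z y :
      eval (RPrim f g) (n :: v) z -> eval g (n :: z :: v) y ->
      eval (RPrim f g) (n.+1 :: v) y
  | ev_mu f v n :
      eval f (n :: v) 0 ->
      (forall m, m < n -> exists k, eval f (m :: v) k.+1) ->
      eval (RMu f) v n
with evals : list recf -> seq nat -> seq nat -> Prop :=
  | evs_nil v : evals [::] v [::]
  | evs_cons g gs v y ys : eval g v y -> evals gs v ys -> evals (g :: gs) v (y :: ys).

(* Decoding generic trees (a countType, hence Goedel-numbered by nat via
   pickle/unpickle) into recursive-function terms; every term is hit. *)
Fixpoint decode (t : GenTree.tree nat) : option recf :=
  match t with
  | GenTree.Leaf _ => None
  | GenTree.Node n ts =>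
    let fix decs (ts : seq (GenTree.tree nat)) : option (seq recf) :=
      match ts with
      | [::] => Some [::]
      | t :: ts' =>
        match decode t, decs ts' with
        | Some f, Some fs => Some (f :: fs)
        | _, _ => None
        end
      end in
    match n, ts with
    | 0, [::] => Some RZero
    | 1, [::] => Some RSucc
    | 2, [:: GenTree.Leaf i] => Some (RProj i)
    | 3, f :: gs =>
      match decode f, decs gs with
      | Some f', Some gs' => Some (RComp f' gs')
      | _, _ => None
      end
    | 4, [:: f; g] =>
      match decode f, decode g with
      | Some f', Some g' => Some (RPrim f' g')
      | _, _ => None
      end
    | 5, [:: f] =>
      match decode f with Some f' => Some (RMu f') | None => None end
    | _, _ => None
    end
  end.

Definition code (e : nat) : option recf :=
  match (unpickle e : option (GenTree.tree nat)) with
  | Some t => decode t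
  | None => None
  end.

(* The fixed standard enumeration: phi e x y  <->  varphi_e(x) is defined
   and equals y.  Indices that do not decode are nowhere defined. *)
Definition phi (e x y : nat) : Prop :=
  exists t, code e = Some t /\ eval t [:: x] y.

Definition defined (e x : nat) : Prop := exists y, phi e x y.

Definition computable (g : nat -> nat) : Prop :=
  exists e, forall n, phi e n (g n).

(* Canonical indexing of finite sets: D_u = { z | bit z of u is 1 },
   i.e. u = sum_{z in D_u} 2^z.  A function f : N -> P_fin(N) is given
   by the function n |-> canonical index of f(n). *)
Definition Dfin (u z : nat) : bool := odd (u %/ 2 ^ z).

Definition re (A : nat -> bool) : Prop :=
  exists e, forall z, A z <-> defined e z.

Definition charf (A : nat -> bool) (z : nat) : nat := nat_of_bool (A z).

Definition D_weu (A : nat -> bool) : Prop :=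
  re A /\
  exists f : nat -> nat, computable f /\
    forall e,
      (forall z, Dfin (f e) z -> defined e z) ->
      exists z, Dfin (f e) z /\ exists y, phi e z y /\ y <> charf A z.

(* A finite set D_s can be turned, uniformly and computably in s, into a
   "tester" program: on input z it returns 0 if z is in D_s, returns 1 once z
   is enumerated into A, and diverges otherwise.  If D_s is disjoint from A,
   the tester agrees with the characteristic function of A wherever it is
   defined, so D_(f e) for its index e must contain a point outside both A
   and D_s (otherwise the tester would be defined on all of D_(f e) and agree
   there with the characteristic function of A).  Starting from the empty
   set, let U_(n+1) be U_n together with all these sets for every D_s
   contained in U_n.  Taking D_s to be U_n minus A shows that U_(n+1) \ U_n
   meets the complement of A, and these differences form the required
   disjoint strong array.  The index of the tester of s is an explicit
   arithmetic function of s, because the code of the constant program for s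
   is affine in the code of the one for s - 1. *)

From mathcomp Require Import all_boot.
From Corelib Require Import Setoid.

Set Implicit Arguments.
Unset Strict Implicit.
Unset Printing Implicit Defensive.

Fixpoint all_prop (P : recf -> Prop) (l : seq recf) : Prop :=
  if l is g :: l' then P g /\ all_prop P l' else True.

Definition recf_nested_ind (P : recf -> Prop)
  (Pzero : P RZero) (Psucc : P RSucc) (Pproj : forall i, P (RProj i))
  (Pcomp : forall f gs, P f -> all_prop P gs -> P (RComp f gs))
  (Pprim : forall f g, P f -> P g -> P (RPrim f g))
  (Pmu : forall f, P f -> P (RMu f)) : forall t, P t :=
  fix loop t := match t with
  | RZero => Pzero | RSucc => Psucc | RProj i => Pproj i
  | RComp f gs => Pcomp f gs (loop f)
      ((fix loops (l : seq recf) : all_prop P l :=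
         match l with [::] => I | g :: l' => conj (loop g) (loops l') end) gs)
  | RPrim f g => Pprim f g (loop f) (loop g)
  | RMu f => Pmu f (loop f) end.

Lemma eval_comp_inv f gs v y :
  eval (RComp f gs) v y -> exists2 ws, evals gs v ws & eval f ws y.
Proof. by inversion 1; eexists; eauto. Qed.

Lemma eval_prim_inv f g v y : eval (RPrim f g) v y ->
  (exists2 w, v = 0 :: w & eval f w y) \/
  (exists n w z, [/\ v = n.+1 :: w, eval (RPrim f g) (n :: w) z
                   & eval g [:: n, z & w] y]).
Proof. by inversion 1; [left; eexists | right; do 3 eexists; split]; eauto. Qed.

Lemma eval_mu_inv f v n : eval (RMu f) v n ->
  eval f (n :: v) 0 /\ (forall m, m < n -> exists k, eval f (m :: v) k.+1).
Proof. by inversion 1. Qed.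

Lemma evals_nil_inv v ws : evals [::] v ws -> ws = [::].
Proof. by inversion 1. Qed.

Lemma evals_cons_inv g gs v ws : evals (g :: gs) v ws ->
  exists y ys, [/\ ws = y :: ys, eval g v y & evals gs v ys].
Proof. by inversion 1; do 2 eexists; split; eauto. Qed.

Lemma eval_functional t v y y' : eval t v y -> eval t v y' -> y = y'.
Proof.
elim/recf_nested_ind: t v y y'.
- by move=> v y y' H1 H2; inversion H1; inversion H2.
- by move=> v y y' H1 H2; inversion H1; inversion H2.
- by move=> i v y y' H1 H2; inversion H1; inversion H2.
- move=> f gs IHf IHgs v y y' /eval_comp_inv[ws Hws Hf] /eval_comp_inv[ws' Hws' Hf'].
  suff Ews : ws = ws' by subst ws'; exact: IHf Hf Hf'.
  elim: gs IHgs ws ws' Hws Hws' {Hf Hf'} => [|g gs IH] IHgs ws ws'.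
    by move=> /evals_nil_inv-> /evals_nil_inv->.
  case: IHgs => IHg IHgs.
  case/evals_cons_inv=> [y1 [ys1 [-> Hg1 Hgs1]]].
  case/evals_cons_inv=> [y2 [ys2 [-> Hg2 Hgs2]]].
  by rewrite (IHg _ _ _ Hg1 Hg2) (IH IHgs _ _ Hgs1 Hgs2).
- move=> f g IHf IHg [|n w] y y' H1; first by inversion H1.
  elim: n y y' H1 => [|n IH] y y'.
    case/eval_prim_inv=> [[_ [<-] H1]|[? [? [? [//]]]]].
    case/eval_prim_inv=> [[_ [<-] H2]|[? [? [? [//]]]]].
    exact: IHf H1 H2.
  case/eval_prim_inv=> [[? //]|[_ [_ [z1 [[<- <-] Hn1 Hg1]]]]].
  case/eval_prim_inv=> [[? //]|[_ [_ [z2 [[<- <-] Hn2 Hg2]]]]].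
  by rewrite (IH _ _ Hn1 Hn2) in Hg1; exact: IHg Hg1 Hg2.
- move=> f IHf v n n' /eval_mu_inv[H1 H2] /eval_mu_inv[H3 H4].
  case: (ltngtP n n') => // [/H4|/H2] [k Hk].
  + by have := IHf _ _ _ H1 Hk.
  + by have := IHf _ _ _ H3 Hk.
Qed.

Fixpoint recf_tree (t : recf) : GenTree.tree nat :=
  match t with
  | RZero => GenTree.Node 0 [::]
  | RSucc => GenTree.Node 1 [::]
  | RProj i => GenTree.Node 2 [:: GenTree.Leaf i]
  | RComp f gs => GenTree.Node 3 (recf_tree f :: map recf_tree gs)
  | RPrim f g => GenTree.Node 4 [:: recf_tree f; recf_tree g]
  | RMu f => GenTree.Node 5 [:: recf_tree f]
  end.

Lemma decode_recf_tree t : decode (recf_tree t) = Some t.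
Proof.
elim/recf_nested_ind: t => //= [f gs -> IHgs|f g -> ->|f ->] //.
by elim: gs IHgs => //= g gs IH [-> /IH]; case: (_ (map _ gs)) => // ? [->].
Qed.

Definition index_of (t : recf) : nat := pickle (recf_tree t).

Lemma code_index_of t : code (index_of t) = Some t.
Proof. by rewrite /code /index_of pickleK decode_recf_tree. Qed.

Definition computes (t : recf) (F : seq nat -> nat) := forall v, eval t v (F v).

Lemma computes_ext t F G : computes t F -> F =1 G -> computes t G.
Proof. by move=> tF FG v; rewrite -FG. Qed.

Lemma computes_zero : computes RZero (fun _ => 0).
Proof. by move=> v; constructor. Qed.

Lemma computes_succ : computes RSucc (fun v => (nth 0 v 0).+1).
Proof. by case=> [|a v]; constructor. Qed.

Lemma computes_proj i : computes (RProj i) (fun v => nth 0 v i).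
Proof. by move=> v; constructor. Qed.

Lemma computes_comp1 f F g G : computes f F -> computes g G ->
  computes (RComp f [:: g]) (fun v => F [:: G v]).
Proof. by move=> fF gG v; econstructor; [repeat constructor | exact: fF]. Qed.

Lemma computes_comp2 f F g1 G1 g2 G2 :
  computes f F -> computes g1 G1 -> computes g2 G2 ->
  computes (RComp f [:: g1; g2]) (fun v => F [:: G1 v; G2 v]).
Proof. by move=> fF g1G1 g2G2 v; econstructor; [repeat constructor | exact: fF]. Qed.

Lemma computes_comp3 f F g1 G1 g2 G2 g3 G3 :
  computes f F -> computes g1 G1 -> computes g2 G2 -> computes g3 G3 ->
  computes (RComp f [:: g1; g2; g3]) (fun v => F [:: G1 v; G2 v; G3 v]).
Proof. by move=> fF ? ? ? v; econstructor; [repeat constructor | exact: fF]. Qed.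

Lemma computes_unary t F : (forall n, eval t [:: n] (F n)) ->
  computes (RComp t [:: RProj 0]) (fun v => F (nth 0 v 0)).
Proof. by move=> tF v; econstructor; [repeat constructor | exact: tF]. Qed.

Lemma computesE t F v y : computes t F -> eval t v y <-> y = F v.
Proof. by move=> tF; split=> [Hy | ->]; [exact: eval_functional Hy (tF v) | exact: tF]. Qed.

Lemma eval_comp1E f g v y :
  eval (RComp f [:: g]) v y <-> exists2 w, eval g v w & eval f [:: w] y.
Proof.
split=> [/eval_comp_inv[ws Hws Hf] | [w Hg Hf]]; last by econstructor; eauto using evals.
case/evals_cons_inv: Hws Hf => w [ws' [-> Hg /evals_nil_inv->]]; exists w => //.
Qed.

Lemma eval_comp2E f g1 G1 g2 G2 v y : computes g1 G1 -> computes g2 G2 ->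
  eval (RComp f [:: g1; g2]) v y <-> eval f [:: G1 v; G2 v] y.
Proof.
move=> g1G1 g2G2; split=> [/eval_comp_inv[ws Hws Hf] | Hf]; last first.
  by econstructor; [repeat constructor | exact: Hf].
case/evals_cons_inv: Hws Hf => w1 [ws1 [-> /(computesE _ _ g1G1)-> Hws]].
by case/evals_cons_inv: Hws => w2 [ws2 [-> /(computesE _ _ g2G2)-> /evals_nil_inv->]].
Qed.

Lemma eval_prim0E f g w y : eval (RPrim f g) (0 :: w) y <-> eval f w y.
Proof.
split=> [|Hf]; last exact: ev_prim0.
by case/eval_prim_inv=> [[_ [<-] //] | [? [? [? [//]]]]].
Qed.

Lemma eval_primSE f g n w y : eval (RPrim f g) (n.+1 :: w) y <->
  exists2 z, eval (RPrim f g) (n :: w) z & eval g [:: n, z & w] y.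
Proof.
split=> [|[z Hz Hg]]; last exact: ev_primS Hz Hg.
by case/eval_prim_inv=> [[? //] | [_ [_ [z [[<- <-] Hz Hg]]]]]; exists z.
Qed.

Fixpoint primrec (F G : seq nat -> nat) n w :=
  if n is k.+1 then G [:: k, primrec F G k w & w] else F w.

Lemma eval_primrec f g F G : computes f F -> computes g G ->
  forall n w, eval (RPrim f g) (n :: w) (primrec F G n w).
Proof.
move=> fF gG; elim=> [|n IH] w; first by constructor.
by econstructor; [exact: IH | exact: gG].
Qed.

Definition RPrim3 f g := RComp (RPrim f g) [:: RProj 0; RProj 1; RProj 2].

Lemma computes_prim3 f g F G : computes f F -> computes g G ->
  computes (RPrim3 f g) (fun v => primrec F G (nth 0 v 0) [:: nth 0 v 1; nth 0 v 2]).
Proof. by move=> fF gG v; econstructor; [repeat constructor | exact: eval_primrec]. Qed.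

Fixpoint RConst (c : nat) : recf :=
  if c is c'.+1 then RComp RSucc [:: RConst c'] else RZero.

Lemma computes_const c : computes (RConst c) (fun _ => c).
Proof.
elim: c => [|c IH]; first exact: computes_zero.
exact: computes_comp1 computes_succ IH.
Qed.

Definition RAdd := RPrim3 (RProj 0) (RComp RSucc [:: RProj 1]).

Lemma computes_add : computes RAdd (fun v => nth 0 v 0 + nth 0 v 1).
Proof.
apply: computes_ext (computes_prim3 (computes_proj 0)
  (computes_comp1 computes_succ (computes_proj 1))) _ => v /=.
by elim: (nth 0 v 0) => //= n ->.
Qed.

Definition RMul := RPrim3 RZero (RComp RAdd [:: RProj 1; RProj 2]).

Lemma computes_mul : computes RMul (fun v => nth 0 v 0 * nth 0 v 1).
Proof.
apply: computes_ext (computes_prim3 computes_zero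
  (computes_comp2 computes_add (computes_proj 1) (computes_proj 2))) _ => v /=.
by elim: (nth 0 v 0) => //= n ->; rewrite mulSn addnC.
Qed.

Definition RPred := RPrim3 RZero (RProj 0).

Lemma computes_pred : computes RPred (fun v => (nth 0 v 0).-1).
Proof.
apply: computes_ext (computes_prim3 computes_zero (computes_proj 0)) _ => v /=.
by case: (nth 0 v 0).
Qed.

Definition RSub :=
  RComp (RPrim3 (RProj 0) (RComp RPred [:: RProj 1])) [:: RProj 1; RProj 0].

Lemma computes_sub : computes RSub (fun v => nth 0 v 0 - nth 0 v 1).
Proof.
apply: computes_ext (computes_comp2 (computes_prim3 (computes_proj 0)
  (computes_comp1 computes_pred (computes_proj 1))) (computes_proj 1) (computes_proj 0)) _.
by move=> v /=; elim: (nth 0 v 1) => [|n IH] /=; rewrite ?subn0 // IH subnS.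
Qed.

Definition RPow :=
  RComp (RPrim3 (RConst 1) (RComp RMul [:: RProj 1; RProj 2])) [:: RProj 1; RProj 0].

Lemma computes_pow : computes RPow (fun v => nth 0 v 0 ^ nth 0 v 1).
Proof.
apply: computes_ext (computes_comp2 (computes_prim3 (computes_const 1)
  (computes_comp2 computes_mul (computes_proj 1) (computes_proj 2)))
  (computes_proj 1) (computes_proj 0)) _ => v /=.
by elim: (nth 0 v 1) => //= n ->; rewrite expnSr.
Qed.

Definition RPow2 t := RComp RPow [:: RConst 2; t].

Lemma computes_pow2 t F : computes t F -> computes (RPow2 t) (fun v => 2 ^ F v).
Proof. exact: computes_comp2 computes_pow (computes_const 2). Qed.

Definition RNot t := RComp RSub [:: RConst 1; t].

Lemma computes_not t F : computes t F -> computes (RNot t) (fun v => F v == 0).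
Proof.
move=> tF; apply: computes_ext (computes_comp2 computes_sub (computes_const 1) tF) _.
by move=> v /=; case: (F v).
Qed.

Lemma computes_negb t (b : seq nat -> bool) : computes t b -> computes (RNot t) (fun v => ~~ b v).
Proof. by move=> tb; apply: computes_ext (computes_not tb) _ => v; case: (b v). Qed.

Lemma computes_and t1 t2 (b1 b2 : seq nat -> bool) : computes t1 b1 -> computes t2 b2 ->
  computes (RComp RMul [:: t1; t2]) (fun v => b1 v && b2 v).
Proof.
move=> t1b1 t2b2; apply: computes_ext (computes_comp2 computes_mul t1b1 t2b2) _.
by move=> v /=; case: (b1 v); case: (b2 v).
Qed.

Definition ROdd := RPrim3 RZero (RNot (RProj 1)).

Lemma computes_odd : computes ROdd (fun v => odd (nth 0 v 0)).
Proof.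
apply: computes_ext (computes_prim3 computes_zero (computes_not (computes_proj 1))) _.
by move=> v /=; elim: (nth 0 v 0) => //= n ->; case: (odd n).
Qed.

Definition RLe := RNot RSub.

Lemma computes_le : computes RLe (fun v => nth 0 v 0 <= nth 0 v 1).
Proof. by apply: computes_ext (computes_not computes_sub) _ => v; rewrite subn_eq0. Qed.

Definition RPositive := RNot (RNot (RProj 0)).

Lemma computes_positive : computes RPositive (fun v => 0 < nth 0 v 0).
Proof.
apply: computes_ext (computes_not (computes_not (computes_proj 0))) _ => v /=.
by case: (nth 0 v 0).
Qed.

Definition RSum t := RPrim3 RZero
  (RComp RAdd [:: RProj 1; RComp t [:: RProj 0; RProj 2; RProj 3]]).

Lemma computes_sum t F : computes t F ->
  computes (RSum t) (fun v => \sum_(k < nth 0 v 0) F [:: k : nat; nth 0 v 1; nth 0 v 2]).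
Proof.
move=> tF; apply: computes_ext (computes_prim3 computes_zero (computes_comp2 computes_add
  (computes_proj 1) (computes_comp3 tF (computes_proj 0) (computes_proj 2) (computes_proj 3)))) _.
move=> v /=; elim: (nth 0 v 0) => [|n IH]; first by rewrite big_ord0.
by rewrite big_ord_recr /= IH.
Qed.

Lemma sum_ltn_ord n m : \sum_(k < n) (k < m) = minn n m.
Proof.
elim: n => [|n IH]; first by rewrite big_ord0 min0n.
rewrite big_ord_recr /= IH; case: (ltnP n m) => [lt_nm | le_mn].
  by rewrite !(minn_idPl _) ?addn1 // ltnW.
by rewrite addn0 !(minn_idPr _) // leqW.
Qed.

Lemma sum_mul_leq_div x d : 0 < d -> \sum_(k < x) (k.+1 * d <= x) = x %/ d.
Proof.
move=> d_gt0; under eq_bigr do rewrite -leq_divRL //.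
by rewrite sum_ltn_ord (minn_idPr _) // leq_div.
Qed.

Definition RDfin := RComp ROdd [:: RComp
  (RSum (RComp RLe [:: RComp RMul [:: RComp RSucc [:: RProj 0]; RProj 2]; RProj 1]))
  [:: RProj 0; RProj 0; RPow2 (RProj 1)]].

Lemma computes_Dfin : computes RDfin (fun v => Dfin (nth 0 v 0) (nth 0 v 1)).
Proof.
apply: computes_ext (computes_comp1 computes_odd (computes_comp3 (computes_sum
  (computes_comp2 computes_le (computes_comp2 computes_mul (computes_comp1
  computes_succ (computes_proj 0)) (computes_proj 2)) (computes_proj 1)))
  (computes_proj 0) (computes_proj 0) (computes_pow2 (computes_proj 1)))) _.
by move=> v /=; rewrite sum_mul_leq_div ?expn_gt0.
Qed.

Definition set_index (b : pred nat) n := \sum_(z < n) 2 ^ z * b z.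

Lemma set_indexS b n : set_index b n.+1 = set_index b n + 2 ^ n * b n.
Proof. by rewrite /set_index big_ord_recr. Qed.

Lemma set_index_lt b n : set_index b n < 2 ^ n.
Proof.
elim: n => [|n IH]; first by rewrite /set_index big_ord0.
rewrite set_indexS expnS mul2n -addnn -addSn leq_add //.
by case: (b n); rewrite ?muln1 ?muln0 ?expn_gt0.
Qed.

Lemma Dfin_set_index b n z : Dfin (set_index b n) z = (z < n) && b z.
Proof.
rewrite /Dfin; elim: n => [|n IH]; first by rewrite /set_index big_ord0 div0n.
have [lt_zn | lt_nz | ->] := ltngtP z n.
- rewrite set_indexS.
  have -> : 2 ^ n = 2 ^ (n - z) * 2 ^ z by rewrite -expnD subnK // ltnW.
  rewrite mulnAC addnC divnMDl ?expn_gt0 //.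
  by rewrite oddD oddM oddX subn_eq0 leqNgt lt_zn /= IH lt_zn ltnW.
- rewrite divn_small; last exact: leq_trans (set_index_lt b n.+1) (leq_pexp2l _ lt_nz).
  by rewrite ltnS leqNgt lt_nz.
- rewrite set_indexS addnC mulnC divnMDl ?expn_gt0 // divn_small ?set_index_lt //.
  by rewrite addn0 ltnSn; case: (b n).
Qed.

Lemma Dfin_lt u z : Dfin u z -> z < u.
Proof.
rewrite /Dfin; case: ltnP => // le_uz.
by rewrite divn_small // (leq_ltn_trans le_uz) // ltn_expl.
Qed.

Lemma sum_bool_neq0 (I : finType) (b : pred I) : (\sum_i b i != 0) = [exists i, b i].
Proof.
rewrite sum_nat_eq0 negb_forall; apply: eq_existsb => i.
by case: (b i).
Qed.

Definition RSetIndex t := RSum (RComp RMul [:: RPow2 (RProj 0); t]).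

Lemma computes_set_index t (b : seq nat -> bool) : computes t b ->
  computes (RSetIndex t)
    (fun v => set_index (fun z => b [:: z; nth 0 v 1; nth 0 v 2]) (nth 0 v 0)).
Proof.
move=> tb; apply: computes_ext
  (computes_sum (computes_comp2 computes_mul (computes_pow2 (computes_proj 0)) tb)) _.
by [].
Qed.

Definition code_from (l : seq nat) m := foldr (fun n m => 2 ^ n * m.*2.+1) m l.
Definition code_slope (l : seq nat) := foldr (fun n a => 2 ^ n * 2 * a) 1 l.

Lemma code_fromE l m : code_from l m = code_slope l * m + code_from l 0.
Proof.
elim: l => [|n l IH]; first by rewrite /code_from /code_slope /= mul1n addn0.
rewrite /code_from /code_slope /= -/(code_from l m) -/(code_from l 0) -/(code_slope l) IH.
by rewrite doubleD -addnS mulnDr -mul2n !mulnA (mulnC (2 ^ n) 2).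
Qed.

Lemma code_from_cat l1 l2 m : code_from (l1 ++ l2) m = code_from l1 (code_from l2 m).
Proof. by rewrite /code_from foldr_cat. Qed.

Lemma code_slope_cat l1 l2 : code_slope (l1 ++ l2) = code_slope l1 * code_slope l2.
Proof.
by rewrite /code_slope; elim: l1 => [|n l IH] /=; rewrite ?mul1n // IH !mulnA.
Qed.

Definition recf_code t := map pickle (GenTree.encode (recf_tree t)).

Lemma index_ofE t : index_of t = code_from (recf_code t) 0.
Proof. by []. Qed.

Definition marker j := pickle (inl j : nat + nat).
Arguments marker : simpl never.

Lemma recf_code_comp f gs :
  recf_code (RComp f gs) = marker 4 :: recf_code f ++ flatten (map recf_code gs) ++ [:: marker 0].
Proof.
rewrite /recf_code /= map_rcons -cats1 map_cat map_flatten -map_comp.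
by rewrite -catA -map_comp.
Qed.

Definition const_slope s := code_slope (recf_code (RConst s)).
Definition const_offset s := code_from (recf_code (RConst s)) 0.

(* The Goedel number of a term whose code is [pre], then the constant [s],
   then the closing marker of an [RComp], as an affine function of the
   slope and offset of [RConst s]. *)
Definition hole_code pre (a b : nat) :=
  code_slope pre * (a * code_from [:: marker 0] 0 + b) + code_from pre 0.

Lemma code_from_hole pre s :
  code_from (pre ++ recf_code (RConst s) ++ [:: marker 0]) 0 =
  hole_code pre (const_slope s) (const_offset s).
Proof. by rewrite !code_from_cat code_fromE (code_fromE (recf_code _)). Qed.

Definition const_pre := [:: marker 4; marker 2; marker 0].

Lemma recf_code_constS s :
  recf_code (RConst s.+1) = const_pre ++ recf_code (RConst s) ++ [:: marker 0].
Proof. by rewrite [RConst _]/= recf_code_comp [flatten _]/= cats0. Qed.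

(* These codes are huge unary numerals: conversion must never unfold them. *)
Opaque marker recf_code code_from code_slope.

Lemma const_slopeE s : const_slope s =
  (code_slope const_pre * code_slope [:: marker 0]) ^ s * code_slope (recf_code RZero).
Proof.
elim: s => [|s IH]; first by rewrite expn0 mul1n; exact: erefl.
rewrite /const_slope recf_code_constS !code_slope_cat -/(const_slope s) IH.
move: (code_slope const_pre) (code_slope [:: marker 0]) (code_slope (recf_code RZero)) => a b c.
by rewrite expnS -!mulnA; congr (_ * _); rewrite (mulnC c) mulnCA.
Qed.

Lemma const_offsetS s : const_offset s.+1 = hole_code const_pre (const_slope s) (const_offset s).
Proof. by rewrite -code_from_hole -recf_code_constS. Qed.

Definition RHoleCode pre ta tb := RComp RAdd [:: RComp RMul [:: RConst (code_slope pre);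
  RComp RAdd [:: RComp RMul [:: ta; RConst (code_from [:: marker 0] 0)]; tb]];
  RConst (code_from pre 0)].

Lemma computes_hole_code pre ta tb A B : computes ta A -> computes tb B ->
  computes (RHoleCode pre ta tb) (fun v => hole_code pre (A v) (B v)).
Proof.
move=> taA tbB; exact: computes_comp2 computes_add (computes_comp2 computes_mul
  (computes_const _) (computes_comp2 computes_add (computes_comp2 computes_mul taA
  (computes_const _)) tbB)) (computes_const _).
Qed.

Definition RConstSlope := RComp RMul [:: RComp RPow
  [:: RConst (code_slope const_pre * code_slope [:: marker 0]); RProj 0];
  RConst (code_slope (recf_code RZero))].

Lemma computes_const_slope : computes RConstSlope (fun v => const_slope (nth 0 v 0)).
Proof.
apply: computes_ext (computes_comp2 computes_mul (computes_comp2 computes_pow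
  (computes_const _) (computes_proj 0)) (computes_const _)) _.
by move=> v; rewrite const_slopeE.
Qed.

Definition RConstOffset := RPrim3 (RConst (const_offset 0))
  (RHoleCode const_pre (RComp RConstSlope [:: RProj 0]) (RProj 1)).

Lemma computes_const_offset : computes RConstOffset (fun v => const_offset (nth 0 v 0)).
Proof.
apply: computes_ext (computes_prim3 (computes_const _) (computes_hole_code const_pre
  (computes_comp1 computes_const_slope (computes_proj 0)) (computes_proj 1))) _.
move=> v; elim: (nth 0 v 0) => [|n IH]; first exact: erefl.
by rewrite const_offsetS -IH; exact: erefl.
Qed.

Section Tester.
Variable tA : recf.

(* On [:: z; s], a primitive recursion of length [z \notin D_s] whose only
   step evaluates [tA] on [z] and then returns 1. *)
Definition tester_body := RComp
  (RPrim RZero (RComp RSucc [:: RComp RZero [:: RComp tA [:: RProj 2]]]))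
  [:: RNot (RComp RDfin [:: RProj 1; RProj 0]); RProj 0].

Definition tester s := RComp tester_body [:: RProj 0; RConst s].

Lemma tester_spec s z y : eval (tester s) [:: z] y <->
  if Dfin s z then y = 0 else (exists y0, eval tA [:: z] y0) /\ y = 1.
Proof.
have notDfin := computes_negb (computes_comp2 computes_Dfin (computes_proj 1) (computes_proj 0)).
rewrite (eval_comp2E _ _ _ (computes_proj 0) (computes_const s)) /tester_body.
rewrite (eval_comp2E _ _ _ notDfin (computes_proj 0)) /=.
have zeroE v w := computesE v w computes_zero.
case: (Dfin s z) => /=; first by rewrite eval_prim0E zeroE.
rewrite eval_primSE; split=> [[_ /eval_prim0E /zeroE-> Hy] | [[y0 Hy0] ->]].
  case/eval_comp1E: Hy => w /eval_comp1E[y0 /eval_comp1E[p]].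
  move=> /(computesE _ _ (computes_proj 2))-> Hy0.
  by move=> /zeroE-> /(computesE _ _ computes_succ)->; split; first by exists y0.
exists 0; first exact/eval_prim0E/computes_zero.
apply/eval_comp1E; exists 0; last exact: computes_succ.
apply/eval_comp1E; exists y0; last exact: computes_zero.
by apply/eval_comp1E; exists z; first exact: (computes_proj 2 [:: 0; 0; z]).
Qed.

Definition tester_pre := marker 4 :: recf_code tester_body ++ recf_code (RProj 0).

Lemma index_of_tester s :
  index_of (tester s) = hole_code tester_pre (const_slope s) (const_offset s).
Proof.
rewrite index_ofE recf_code_comp -code_from_hole.
by rewrite [flatten _]/= cats0 /tester_pre cat_cons -!catA.
Qed.

Definition RTesterIndex := RHoleCode tester_pre RConstSlope RConstOffset.

Lemma computes_tester_index :
  computes RTesterIndex (fun v => index_of (tester (nth 0 v 0))).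
Proof.
apply: computes_ext (computes_hole_code _ computes_const_slope computes_const_offset) _.
by move=> v; rewrite index_of_tester.
Qed.
End Tester.

Section Stages.
Variable g : nat -> nat.

Definition bound u := u + \sum_(s < 2 ^ u) g s.

(* Every subset of [D_u] has a canonical index below [2 ^ u]. *)
Definition step u :=
  set_index (fun z => Dfin u z || [exists s : 'I_(2 ^ u), Dfin (g s) z]) (bound u).

Lemma Dfin_step u z : Dfin (step u) z = Dfin u z || [exists s : 'I_(2 ^ u), Dfin (g s) z].
Proof.
rewrite Dfin_set_index andb_idl // => /orP[/Dfin_lt lt_zu | /existsP[s /Dfin_lt lt_zg]].
  exact: leq_trans lt_zu (leq_addr _ _).
apply: leq_trans lt_zg (leq_trans _ (leq_addl _ _)).
by rewrite (bigD1 s) //= leq_addr.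
Qed.

Definition stage n := iter n step 0.

Lemma Dfin_stage_mono n m z : n <= m -> Dfin (stage n) z -> Dfin (stage m) z.
Proof.
move=> /subnK<-; elim: (m - n) => // k IH /IH.
by rewrite addSn [stage _]/= Dfin_step => ->.
Qed.

Definition layer n :=
  set_index (fun z => Dfin (stage n.+1) z && ~~ Dfin (stage n) z) (stage n.+1).

Lemma Dfin_layer n z : Dfin (layer n) z = Dfin (stage n.+1) z && ~~ Dfin (stage n) z.
Proof. by rewrite Dfin_set_index andb_idl // => /andP[/Dfin_lt]. Qed.

Lemma layer_disjoint n m z : n <> m -> ~ (Dfin (layer n) z /\ Dfin (layer m) z).
Proof.
have disjoint_lt k l : k < l -> Dfin (layer k) z -> ~~ Dfin (layer l) z.
  move=> lt_kl; rewrite !Dfin_layer => /andP[in_k1 _].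
  by rewrite (Dfin_stage_mono lt_kl in_k1) andbF.
move=> neq_nm [in_n in_m]; case: (ltngtP n m) => [lt_nm | lt_mn | //].
  by move: in_m; rewrite (negbTE (disjoint_lt _ _ lt_nm in_n)).
by move: in_n; rewrite (negbTE (disjoint_lt _ _ lt_mn in_m)).
Qed.

(* Apply the hypothesis to the part of [D_(stage n)] inside [P]. *)
Lemma layer_meets (P : pred nat) :
  (forall s, (forall z, Dfin s z -> P z) -> exists z, [&& Dfin (g s) z, P z & ~~ Dfin s z]) ->
  forall n, exists z, Dfin (layer n) z && P z.
Proof.
move=> escape n; set u := stage n.
pose s := set_index (fun z => Dfin u z && P z) u.
have [|z /and3P[in_gs Pz notin_s]] := escape s.
  by move=> z; rewrite Dfin_set_index => /and3P[].
have notin_u : ~~ Dfin u z.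
  by apply: contra notin_s => in_u; rewrite Dfin_set_index in_u Pz (Dfin_lt in_u).
exists z; rewrite Dfin_layer [stage _]/= -/u Dfin_step (negbTE notin_u) Pz !andbT /=.
by apply/existsP; exists (Ordinal (set_index_lt (fun z => Dfin u z && P z) u)).
Qed.

Variable tg : recf.
Hypothesis tg_g : forall n, eval tg [:: n] (g n).

Definition RBound := RComp RAdd [:: RProj 0;
  RComp (RSum (RComp tg [:: RProj 0])) [:: RPow2 (RProj 0); RProj 0; RProj 0]].

Lemma computes_bound : computes RBound (fun v => bound (nth 0 v 0)).
Proof.
exact: computes_comp2 computes_add (computes_proj 0) (computes_comp3
  (computes_sum (computes_unary tg_g)) (computes_pow2 (computes_proj 0))
  (computes_proj 0) (computes_proj 0)).
Qed.

Definition RStepPred := RComp RPositive [:: RComp RAdd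
  [:: RComp RDfin [:: RProj 1; RProj 0];
      RComp (RSum (RComp RDfin [:: RComp tg [:: RProj 0]; RProj 2]))
        [:: RPow2 (RProj 1); RProj 1; RProj 0]]].

Lemma computes_step_pred : computes RStepPred (fun v =>
  Dfin (nth 0 v 1) (nth 0 v 0) || [exists s : 'I_(2 ^ nth 0 v 1), Dfin (g s) (nth 0 v 0)]).
Proof.
apply: computes_ext (computes_comp1 computes_positive (computes_comp2 computes_add
  (computes_comp2 computes_Dfin (computes_proj 1) (computes_proj 0))
  (computes_comp3 (computes_sum (computes_comp2 computes_Dfin (computes_unary tg_g)
    (computes_proj 2))) (computes_pow2 (computes_proj 1)) (computes_proj 1)
    (computes_proj 0)))) _.
by move=> v /=; rewrite addn_gt0 lt0b lt0n sum_bool_neq0.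
Qed.

Definition RStep := RComp (RSetIndex RStepPred) [:: RBound; RProj 0; RProj 0].

Lemma computes_step : computes RStep (fun v => step (nth 0 v 0)).
Proof.
exact: computes_comp3 (computes_set_index computes_step_pred) computes_bound
  (computes_proj 0) (computes_proj 0).
Qed.

Definition RStage := RPrim3 RZero (RComp RStep [:: RProj 1]).

Lemma computes_stage : computes RStage (fun v => stage (nth 0 v 0)).
Proof.
apply: computes_ext (computes_prim3 computes_zero
  (computes_comp1 computes_step (computes_proj 1))) _.
by move=> v; elim: (nth 0 v 0) => //= n ->.
Qed.

Definition RLayer := RComp (RSetIndex (RComp RMul [:: RComp RDfin [:: RProj 1; RProj 0];
    RNot (RComp RDfin [:: RProj 2; RProj 0])]))
  [:: RComp RStage [:: RComp RSucc [:: RProj 0]];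
      RComp RStage [:: RComp RSucc [:: RProj 0]]; RStage].

Lemma computes_layer : computes RLayer (fun v => layer (nth 0 v 0)).
Proof.
have stage_succ := computes_comp1 computes_stage (computes_comp1 computes_succ (computes_proj 0)).
exact: (computes_comp3 (computes_set_index (computes_and
  (computes_comp2 computes_Dfin (computes_proj 1) (computes_proj 0))
  (computes_negb (computes_comp2 computes_Dfin (computes_proj 2) (computes_proj 0)))))
  stage_succ stage_succ computes_stage).
Qed.
End Stages.

Lemma phi_index_of t x y : phi (index_of t) x y <-> eval t [:: x] y.
Proof. by rewrite /phi code_index_of; split=> [[_ [[<-]]] | ] //; exists t. Qed.

Lemma phi_program e : exists t, forall x y, phi e x y <-> eval t [:: x] y.
Proof.
rewrite /phi; case: (code e) => [t | ].
  by exists t => x y; split=> [[_ [[<-]]] | ] //; exists t.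
exists (RMu RSucc) => x y; split=> [[? []] // | /eval_mu_inv[]].
by move/(computesE _ _ computes_succ).
Qed.

Section Escape.
Variables (A : pred nat) (tA : recf) (f : nat -> nat).
Hypothesis tA_A : forall z, A z <-> exists y, eval tA [:: z] y.
Hypothesis f_weu : forall e, (forall z, Dfin (f e) z -> defined e z) ->
  exists z, Dfin (f e) z /\ exists y, phi e z y /\ y <> charf A z.

Lemma tester_escapes s : (forall z, Dfin s z -> ~~ A z) ->
  exists z, [&& Dfin (f (index_of (tester tA s))) z, ~~ A z & ~~ Dfin s z].
Proof.
move=> s_notA; set e := index_of (tester tA s).
have [/existsP[z z_escapes] | /existsPn no_escape] :=
  boolP [exists z : 'I_(f e), [&& Dfin (f e) z, ~~ A z & ~~ Dfin s z]].
  by exists z.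
have covered z : Dfin (f e) z -> Dfin s z || A z.
  move=> in_fe; have := no_escape (Ordinal (Dfin_lt in_fe)).
  by rewrite /= in_fe; case: (Dfin s z); case: (A z).
have [|z [in_fe [y [/phi_index_of/tester_spec]]]] := @f_weu e.
  move=> z /covered; rewrite /defined.
  case in_s: (Dfin s z) => /=.
    by exists 0; apply/phi_index_of/tester_spec; rewrite in_s.
  by move=> Az; exists 1; apply/phi_index_of/tester_spec; rewrite in_s; split; first exact/tA_A.
move=> tester_zy; rewrite /charf.
case in_s: (Dfin s z) in tester_zy.
  by rewrite tester_zy (negbTE (s_notA z in_s)).
by case: tester_zy => /tA_A-> ->.
Qed.
End Escape.

Theorem mainTheorem10 (A : nat -> bool) :
  D_weu A ->
  exists h : nat -> nat,
    computable h /\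
    (forall n m, n <> m -> forall z, ~ (Dfin (h n) z /\ Dfin (h m) z)) /\
    (forall n, exists z, Dfin (h n) z /\ ~~ A z).
Proof.
move=> [[eA A_eA] [f [[ef f_ef] f_weu]]].
have [tA tA_eA] := phi_program eA.
have [tf tf_ef] := phi_program ef.
have tA_A z : A z <-> exists y, eval tA [:: z] y.
  by rewrite A_eA /defined; split=> -[y /tA_eA]; exists y.
pose g s := f (index_of (tester tA s)).
pose tg := RComp tf [:: RTesterIndex tA].
have tg_g s : eval tg [:: s] (g s).
  by econstructor; [repeat constructor; exact: computes_tester_index | exact/tf_ef].
exists (layer g); split; [|split].
- by exists (index_of (RLayer tg)) => n; apply/phi_index_of; exact: (computes_layer tg_g [:: n]).
- by move=> n m neq_nm z; exact: layer_disjoint.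
- move=> n; have [z /andP[in_layer notA]] := layer_meets (tester_escapes tA_A f_weu) n.
  by exists z.
Qed.
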